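(* Let $G$ be a finite abelian group and $\Phi$ a normalized $3$-cocycle on $G$. If $V$ and $W$ are simple objects of ${}^{\mathbbm{k}G}_{\mathbbm{k}G}\mathcal{YD}^{\Phi}$ with $g_V=g_W$, then $\dim V=\dim W$.
   Context: $\mathbbm{k}$ is algebraically closed of characteristic zero. For $g\in G$, $\widetilde{\Phi}_g(x,y)=\frac{\Phi(g,x,y)\Phi(x,y,g)}{\Phi(x,g,y)}$. The braided tensor category ${}^{\mathbbm{k}G}_{\mathbbm{k}G}\mathcal{YD}^{\Phi}$ has objects the $G$-graded spaces $V=\bigoplus_gV_g$ with operators $e\triangleright-$ preserving each $V_g$, $1\triangleright v=v$, $e\triangleright(f\triangleright v)=\widetilde{\Phi}_g(e,f)(ef)\triangleright v$ for $v\in V_g$; tensor product: degree $gh$, $e\triangleright(X\otimes Y)=\widetilde{\Phi}_e(g,h)(e\triangleright X)\otimes(e\triangleright Y)$; associator $(X\otimes Y)\otimes Z\mapsto\Phi(e,f,g)^{-1}X\otimes(Y\otimes Z)$; braiding $X\otimes Y\mapsto(e\triangleright Y)\otimes X$. A simple object $V$ is concentrated in a single degree, denoted $g_V$. *)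

From HB Require Import structures.
From mathcomp Require Import all_boot all_order all_algebra all_fingroup.
Set Implicit Arguments. Unset Strict Implicit. Unset Printing Implicit Defensive.
Import GRing.Theory.
Local Open Scope ring_scope.

Definition normalized_3cocycle (k : fieldType) (gT : finGroupType)
    (Phi : gT -> gT -> gT -> k) : Prop :=
  (forall a b c, Phi a b c != 0) /\
  (forall a b c d,
      Phi b c d * Phi a ((b * c)%g) d * Phi a b c
      = Phi ((a * b)%g) c d * Phi a b ((c * d)%g)) /\
  (forall a b, Phi 1%g a b = 1 /\ Phi a 1%g b = 1 /\ Phi a b 1%g = 1).

Definition Phit (k : fieldType) (gT : finGroupType)
    (Phi : gT -> gT -> gT -> k) (g x y : gT) : k :=
  Phi g x y * Phi x y g / Phi x g y.

(* An object of YD^Phi: a (finite-dimensional) G-graded space V = (+)_g deg g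
   with linear operators act e preserving each V_g, act 1 = id and
   act e (act f v) = Phit g e f * act (ef) v for v in V_g. *)
Definition is_YDobj (k : fieldType) (gT : finGroupType)
    (Phi : gT -> gT -> gT -> k) (V : vectType k)
    (deg : gT -> {vspace V}) (act : gT -> 'End(V)) : Prop :=
  (\sum_(g : gT) deg g)%VS = fullv /\
  directv (\sum_(g : gT) deg g) /\
  (forall e g, (act e @: deg g <= deg g)%VS) /\
  (forall v, act 1%g v = v) /\
  (forall e f g v, v \in deg g ->
      act e (act f v) = Phit Phi g e f *: act ((e * f)%g) v).

Definition is_YDsubobj (k : fieldType) (gT : finGroupType) (V : vectType k)
    (deg : gT -> {vspace V}) (act : gT -> 'End(V)) (U : {vspace V}) : Prop :=
  U = (\sum_(g : gT) (U :&: deg g))%VS /\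
  (forall e, (act e @: U <= U)%VS).

Definition YD_simple (k : fieldType) (gT : finGroupType) (V : vectType k)
    (deg : gT -> {vspace V}) (act : gT -> 'End(V)) : Prop :=
  (fullv : {vspace V}) != 0%VS /\
  (forall U : {vspace V}, is_YDsubobj deg act U -> U = 0%VS \/ U = fullv).

From HB Require Import structures.
From mathcomp Require Import all_boot all_order all_algebra all_fingroup.
Set Implicit Arguments.
Unset Strict Implicit. Unset Printing Implicit Defensive.
Import GRing.Theory passmx.
Local Open Scope ring_scope.

(* An object concentrated in degree g is a projective representation
   x |-> M x of G with 2-cocycle c = \tilde\Phi_g, and simplicity makes every
   matrix commuting with all M x scalar (Schur, via an eigenspace, which is a
   subobject).  Averaging T into sum_x (M x)^-1 T (M x) therefore gives the
   scalar |G| tr T / n, and taking T = E_ij yields the orthogonality relation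
   sum_x tr (M x)^-1 tr (M x) = |G|.  As G is abelian, M x is scalar when x is
   c-regular (c(x,y) = c(y,x) for all y) and traceless otherwise, so
   n^2 * #{c-regular x} = |G|; the right-hand side and the set of c-regular
   elements only depend on g. *)

Lemma invmxM (R : comUnitRingType) n (A B : 'M[R]_n) :
  A \in unitmx -> B \in unitmx -> invmx (A *m B) = invmx B *m invmx A.
Proof.
move=> uA uB; have uAB : A *m B \in unitmx by rewrite unitmx_mul uA uB.
have VAB : invmx B *m invmx A *m (A *m B) = 1%:M.
  by rewrite mulmxA -[invmx B *m _ *m A]mulmxA mulVmx // mulmx1 mulVmx.
by rewrite -[LHS]mul1mx -VAB mulmxK.
Qed.

Lemma mulmx_delta_mxE (R : pzRingType) m n p q (A : 'M[R]_(m, n))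
    (B : 'M[R]_(p, q)) r s i j :
  (A *m delta_mx r s *m B) i j = A i r * B s j.
Proof.
rewrite -(mul_delta_mx (0 : 'I_1)) mulmxA -colE -mulmxA -rowE.
by rewrite mxE big_ord1 !mxE.
Qed.

Lemma mxtrace_delta_mx (R : pzRingType) n (i j : 'I_n) :
  \tr (delta_mx i j : 'M[R]_n) = (i == j)%:R.
Proof.
rewrite /mxtrace (bigD1 i) //= big1 ?addr0; first by rewrite mxE eqxx.
by move=> l /negPf nli; rewrite mxE nli.
Qed.

Lemma pchar0_natf_inj (R : idomainType) :
  [pchar R] =i pred0 -> injective (fun m : nat => m%:R : R).
Proof.
move=> R0 m p /= Emp.
have natf_lt_neq a b : (a < b)%N -> a%:R != b%:R :> R.
  move=> lt_ab; have le_ab := ltnW lt_ab.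
  rewrite eq_sym -subr_eq0 -natrB //.
  by apply/negP => /natf0_pchar[|q]; rewrite ?subn_gt0 ?R0.
by case: (ltngtP m p) => [/natf_lt_neq|/natf_lt_neq|//]; rewrite Emp eqxx.
Qed.

Section ProjectiveRepresentation.

Variables (k : fieldType) (gT : finGroupType) (n : nat).
Variables (M : gT -> 'M[k]_n) (c : gT -> gT -> k).
Hypothesis n_neq0 : n%:R != 0 :> k.
Hypothesis c_neq0 : forall x y, c x y != 0.
Hypothesis M1 : M 1%g = 1%:M.
(* Matrices act on row vectors, hence the order of the product. *)
Hypothesis mulM : forall x y, M y *m M x = c x y *: M (x * y)%g.
Hypothesis M_Schur :
  forall T, (forall x, M x *m T = T *m M x) -> exists a, T = a%:M.

Lemma M_unit x : M x \in unitmx.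
Proof.
have : ((c x x^-1)^-1 *: M x^-1) *m M x = 1%:M.
  by rewrite -scalemxAl mulM mulgV M1 scalerA mulVf ?scale1r.
by case/mulmx1_unit.
Qed.

Definition conj_sum T := \sum_x invmx (M x) *m T *m M x.

Lemma conj_sum_commute T y : M y *m conj_sum T = conj_sum T *m M y.
Proof.
suff conjE : invmx (M y) *m conj_sum T *m M y = conj_sum T.
  by rewrite -{1}conjE !mulmxA mulmxV ?M_unit // mul1mx.
rewrite /conj_sum mulmx_sumr mulmx_suml [RHS](reindex_inj (mulgI y)) /=.
apply: eq_bigr => x _; rewrite !mulmxA -invmxM ?M_unit //.
rewrite -[_ *m M x *m M y]mulmxA mulM invmxZ; last first.
  by rewrite unitmxZ ?M_unit // unitfE.
by rewrite -!scalemxAl -!scalemxAr scalerA mulVf // scale1r.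
Qed.

Lemma mxtrace_conj_sum T : \tr (conj_sum T) = \tr T *+ #|gT|.
Proof.
rewrite /conj_sum raddf_sum /= -sumr_const; apply: eq_bigr => x _.
by rewrite mxtrace_mulC mulmxA mulmxV ?M_unit // mul1mx.
Qed.

Lemma conj_sum_scalar T : conj_sum T = (\tr T *+ #|gT| / n%:R)%:M.
Proof.
have [a Ea] := M_Schur (conj_sum_commute T).
have := mxtrace_conj_sum T; rewrite Ea mxtrace_scalar => <-.
by rewrite -[a *+ n]mulr_natr mulfK.
Qed.

Lemma conj_sum_delta_mxE i j :
  conj_sum (delta_mx i j) i j = (i == j)%:R * (#|gT|%:R / n%:R).
Proof.
rewrite conj_sum_scalar mxtrace_delta_mx mxE.
by case: eqP; rewrite ?mulr1n ?mulr0n ?mul1r ?mul0r // mulr_natl.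
Qed.

Lemma sum_mxtrace_invmx_mul :
  \sum_x \tr (invmx (M x)) * \tr (M x) = #|gT|%:R.
Proof.
transitivity (\sum_(i < n) \sum_(j < n) conj_sum (delta_mx i j) i j).
  under eq_bigr do rewrite /mxtrace mulr_suml; rewrite exchange_big /=.
  apply: eq_bigr => i _; under eq_bigr do rewrite mulr_sumr.
  rewrite exchange_big /=; apply: eq_bigr => j _.
  by rewrite /conj_sum summxE; apply: eq_bigr => x _; rewrite mulmx_delta_mxE.
have row_sum i : \sum_(j < n) conj_sum (delta_mx i j) i j = #|gT|%:R / n%:R.
  rewrite (bigD1 i) //= big1 => [|j nji].
    by rewrite conj_sum_delta_mxE eqxx mul1r addr0.
  by rewrite conj_sum_delta_mxE eq_sym (negPf nji) mul0r.
under eq_bigr do rewrite row_sum.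
by rewrite sumr_const card_ord -[_ *+ n]mulr_natr mulfVK.
Qed.

Hypothesis commG : forall x y : gT, commute x y.

Definition c_regular := [set x : gT | [forall y, c x y == c y x]].

Lemma mxtrace_invmx_mul_regular x :
  x \in c_regular -> \tr (invmx (M x)) * \tr (M x) = (n ^ 2)%:R.
Proof.
rewrite inE => /forallP c_xC.
have [a Mx] : exists a, M x = a%:M.
  by apply: M_Schur => y; rewrite !mulM commG (eqP (c_xC y)).
have Va : a^-1 * a = 1.
  apply: (mulIf n_neq0); rewrite mul1r mulr_natr -mxtrace_scalar scalar_mxM.
  by rewrite -invmx_scalar -Mx mulVmx ?M_unit // mxtrace1.
by rewrite Mx invmx_scalar !mxtrace_scalar mulrnAl mulrnAr Va -mulrnA mulnn.
Qed.

Lemma mxtrace_nonregular x : x \notin c_regular -> \tr (M x) = 0.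
Proof.
rewrite inE => /forallPn[y /negP c_xy_neq].
set r := c y x / c x y.
have MxMy : M x *m M y = r *: (M y *m M x).
  by rewrite !mulM commG scalerA divfK.
have : \tr (M x) = r * \tr (M x).
  rewrite -{1}(mulmxK (M_unit y) (M x)) MxMy -scalemxAl mxtraceZ mxtrace_mulC.
  by rewrite mulmxA mulVmx ?M_unit // mul1mx.
move/eqP; rewrite -subr_eq0 -{1}[\tr _]mul1r -mulrBl mulf_eq0 subr_eq0.
case/orP=> [/eqP r1 | /eqP //]; case: c_xy_neq.
by rewrite -[c y x](divfK (c_neq0 x y)) -/r -r1 mul1r.
Qed.

Lemma sqr_dim_mul_card_regular : (n ^ 2 * #|c_regular|)%:R = #|gT|%:R :> k.
Proof.
rewrite -sum_mxtrace_invmx_mul (bigID (mem c_regular)) /=.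
rewrite [X in _ + X]big1 => [|x /mxtrace_nonregular->]; last by rewrite mulr0.
rewrite addr0 (eq_bigr _ mxtrace_invmx_mul_regular) sumr_const.
by rewrite natrM mulr_natr.
Qed.

End ProjectiveRepresentation.

Lemma Phit_neq0 (k : fieldType) (gT : finGroupType)
    (Phi : gT -> gT -> gT -> k) :
  normalized_3cocycle Phi -> forall g x y, Phit Phi g x y != 0.
Proof.
by case=> Phi_neq0 _ g x y; rewrite /Phit mulf_neq0 ?invr_eq0 ?mulf_neq0.
Qed.

Lemma mem_leigenspace (k : fieldType) (V : vectType k) (f : 'End(V)) a v :
  (v \in leigenspace f a) = (f v == a *: v).
Proof.
by rewrite memv_ker add_lfunE opp_lfunE scale_lfunE id_lfunE subr_eq0.
Qed.

Lemma leigenvalue_closed (k : closedFieldType) (V : vectType k)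
    (f : 'End(V)) :
  (0 < \dim {:V})%N -> exists a, leigenvalue f a.
Proof.
move=> dimV_gt0; have e_basis := vbasisP {:V}.
have /closed_rootP[a] :
    size (char_poly (mxof (vbasis {:V}) (vbasis {:V}) f)) != 1%N.
  by rewrite size_char_poly; case: (\dim _) dimV_gt0.
rewrite -eigenvalue_root_char => f_a; exists a.
by rewrite /leigenvalue (leigenspaceE e_basis) vsof_eq0.
Qed.

Section HomogeneousYDobject.

Variables (k : fieldType) (gT : finGroupType) (Phi : gT -> gT -> gT -> k).
Variables (V : vectType k) (deg : gT -> {vspace V}) (act : gT -> 'End(V)).
Variable g : gT.
Hypothesis deg_g : deg g = fullv.

Lemma stable_YDsubobj U :
  (forall x, (act x @: U <= U)%VS) -> is_YDsubobj deg act U.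
Proof.
move=> actU; split=> //; apply/eqP; rewrite eqEsubv; apply/andP; split.
  by apply: (sumv_sup g) => //; rewrite deg_g capvf.
by apply/subv_sumP => x _; apply: capvSl.
Qed.

Hypothesis YD_V : is_YDobj Phi deg act.

Lemma YDact1 : act 1%g = \1%VF.
Proof.
by case: YD_V => _ [_ [_ [act1 _]]]; apply/lfunP => v; rewrite act1 id_lfunE.
Qed.

Lemma YDact_comp x y : (act x \o act y = Phit Phi g x y *: act (x * y)%g)%VF.
Proof.
case: YD_V => _ [_ [_ [_ actM]]]; apply/lfunP => v.
by rewrite comp_lfunE scale_lfunE (actM _ _ g) ?deg_g ?memvf.
Qed.

End HomogeneousYDobject.

Section SimpleHomogeneousYDobject.

Variables (k : closedFieldType) (gT : finGroupType).
Variable Phi : gT -> gT -> gT -> k.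
Variables (V : vectType k) (deg : gT -> {vspace V}) (act : gT -> 'End(V)).
Variable g : gT.
Hypothesis deg_g : deg g = fullv.
Hypothesis simple_V : YD_simple deg act.

Lemma YD_simple_dim_gt0 : (0 < \dim {:V})%N.
Proof. by rewrite lt0n dimv_eq0; case: simple_V. Qed.

Lemma YD_simple_Schur (L : 'End(V)) :
  (forall x, (act x \o L = L \o act x)%VF) -> exists a, L = a *: \1%VF.
Proof.
move=> actL; have [a La] := leigenvalue_closed L YD_simple_dim_gt0; exists a.
have : is_YDsubobj deg act (leigenspace L a).
  apply: (stable_YDsubobj deg_g) => x; apply/subvP => _ /memv_imgP[v Lv ->].
  rewrite mem_leigenspace -comp_lfunE -actL comp_lfunE.
  by move: Lv; rewrite mem_leigenspace => /eqP->; rewrite linearZ.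
case: simple_V => _ /[apply] [[La0|Lfull]].
  by rewrite /leigenvalue La0 eqxx in La.
apply/lfunP => v; rewrite scale_lfunE id_lfunE; apply/eqP.
by rewrite -mem_leigenspace Lfull memvf.
Qed.

Hypothesis YD_V : is_YDobj Phi deg act.

Local Notation e := (vbasis {:V}).
Local Notation M x := (mxof e e (act x)).
Let e_basis : basis_of {:V} e := vbasisP {:V}.

Lemma YDmx_Schur T : (forall x, M x *m T = T *m M x) -> exists a, T = a%:M.
Proof.
move=> MT; have [|a La] := @YD_simple_Schur (hommx e e T).
  move=> x; apply: (can_inj (mxofK e_basis e_basis)).
  rewrite !(mxof_comp _ _ e_basis) (hommxK e_basis e_basis).
  exact: esym (MT x).
exists a; rewrite -[T](hommxK e_basis e_basis) La linearZ /=.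
by rewrite mxof1 ?scalemx1 // (basis_free e_basis).
Qed.

Lemma YD_sqr_dim_mul_card_regular :
    [pchar k] =i pred0 -> abelian [set: gT] -> normalized_3cocycle Phi ->
  (\dim {:V} ^ 2 * #|c_regular (Phit Phi g)|)%N = #|gT|.
Proof.
move=> k0 /centsP cGG Phi_cocycle; apply: (pchar0_natf_inj k0).
apply: (@sqr_dim_mul_card_regular _ _ _ (fun x => M x)).
- by apply: contraTneq YD_simple_dim_gt0 => /(@pchar0_natf_inj _ k0 _ 0%N)->.
- exact: Phit_neq0.
- by rewrite (YDact1 YD_V) mxof1 // (basis_free e_basis).
- by move=> x y; rewrite -mxof_comp // (YDact_comp deg_g YD_V) linearZ.
- exact: YDmx_Schur.
- by move=> x y; apply: cGG; rewrite inE.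
Qed.

End SimpleHomogeneousYDobject.

Theorem proposition4p3 (k : closedFieldType) (gT : finGroupType)
    (Phi : gT -> gT -> gT -> k)
    (hchar : [pchar k] =i pred0)
    (hab : abelian [set: gT])
    (hPhi : normalized_3cocycle Phi)
    (V : vectType k) (degV : gT -> {vspace V}) (actV : gT -> 'End(V))
    (W : vectType k) (degW : gT -> {vspace W}) (actW : gT -> 'End(W))
    (hV : is_YDobj Phi degV actV) (hW : is_YDobj Phi degW actW)
    (sV : YD_simple degV actV) (sW : YD_simple degW actW)
    (g : gT) (gV : degV g = fullv) (gW : degW g = fullv) :
  \dim (fullv : {vspace V}) = \dim (fullv : {vspace W}).
Proof.
have cardV := YD_sqr_dim_mul_card_regular gV sV hV hchar hab hPhi.
have cardW := YD_sqr_dim_mul_card_regular gW sW hW hchar hab hPhi.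
have regular_gt0 : (0 < #|c_regular (Phit Phi g)|)%N.
  have gT_gt0 : (0 < #|gT|)%N by apply/card_gt0P; exists 1%g.
  by rewrite lt0n; apply: contraTneq gT_gt0 => r0; rewrite -cardV r0 muln0.
apply/eqP; rewrite -(eqn_exp2r _ _ (isT : 0 < 2)%N) -(eqn_pmul2r regular_gt0).
by rewrite cardV cardW.
Qed.
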